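(* Let $(\theta_t)_{t\in\mathbb R}$ be a smooth green path, $t_0\in\mathbb R$, and $M\in\mathcal G$ nonzero. Let $M=M_0\supsetneq M_1\supsetneq\cdots\supsetneq M_m=0$ be a chain of strict subobjects of $M$ with $M_{k-1}/M_k\in\mathcal W(\theta_{t_k})$ for real numbers $t_1>t_2>\cdots>t_m$ (such a chain exists and is unique). Then $M\in\mathcal P(\theta_{t_0})$ if and only if $t_k<t_0$ for all $k$, i.e. if and only if $t_1<t_0$.
   Context: Let $\Lambda$ be a finite dimensional algebra over a field with $n$ isoclasses of simple modules, and $\mathrm{mod}\text-\Lambda$ the category of finitely generated right $\Lambda$-modules. Fix a torsion class $\mathcal G\subseteq\mathrm{mod}\text-\Lambda$ (closed under isomorphisms, extensions and quotients). For $B\in\mathcal G$, a subobject of $B$ is a submodule in $\mathcal G$; a subobject $A\subseteq B$ is strict if $A\cap B'\in\mathcal G$ for every subobject $B'$ of $B$; a strict quotient of $B$ is $B/A$ with $A$ a strict subobject. Let $V_\Lambda=\mathrm{Hom}_{\mathbb Z}(K_0\Lambda,\mathbb R)\cong\mathbb R^n$; $\theta(M)$ denotes $\theta$ applied to the dimension vector of $M$. For $M\in\mathcal G$, $D_{\mathcal G}(M)$ is the set of $\theta$ with $\theta(M)=0$ and $\theta(M')\le0$ for every strict subobject $M'$ of $M$; $\mathcal W(\theta)$ is the class of $X\in\mathcal G$ with $\theta\in D_{\mathcal G}(X)$. $\mathcal P(\theta)$ is the class consisting of $0$ and all nonzero $M\in\mathcal G$ with $\theta(M'')>0$ for every nonzero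 strict quotient $M''$ of $M$ (including $M''=M$). A smooth green path is a smooth map $t\mapsto\theta_t$, $\mathbb R\to V_\Lambda$, such that: (1) whenever $\theta_{t_0}\in D_{\mathcal G}(M)$ for some nonzero $M\in\mathcal G$, $\frac{d}{dt}\theta_t(M)|_{t=t_0}>0$; (2) there is $T$ such that $\theta_t(M)>0$ for all $t>T$ and all nonzero $M\in\mathcal G$; (3) there is $T'$ such that $\theta_t(M)<0$ for all $t<T'$ and all nonzero $M\in\mathcal G$. *)

From HB Require Import structures.
From mathcomp Require Import all_boot all_order all_algebra.
From mathcomp Require Import falgebra.
From mathcomp Require Import all_classical all_reals all_analysis.
Set Implicit Arguments. Unset Strict Implicit. Unset Printing Implicit Defensive.
Import Order.TTheory GRing.Theory Num.Theory.
Local Open Scope ring_scope.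

Section Modules.
Variables (K : fieldType) (L : falgType K).

(* A finitely generated right L-module: K^d (row vectors) with a right
   action  v . a := v *m ract a. *)
Record rmod := RMod {
  rdim : nat;
  ract : L -> 'M[K]_rdim;
  ractD : forall a b, ract (a + b) = ract a + ract b;
  ractZ : forall (c : K) a, ract (c *: a) = c *: ract a;
  ract1 : ract 1 = 1%:M;
  ractM : forall a b, ract (a * b) = ract a *m ract b }.

Definition submod (M : rmod) (U : 'M[K]_(rdim M)) : Prop :=
  forall a, (U *m ract M a <= U)%MS.

(* The subquotient U/V of M (V <= U submodules) is isomorphic to N:
   F : N -> U, x |-> x *m F, induces an L-linear bijection N ~ U/V. *)
Definition sq_iso (M : rmod) (U V : 'M[K]_(rdim M)) (N : rmod) : Prop :=
  exists F : 'M[K]_(rdim N, rdim M),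
    [/\ row_free F, (F + V :=: U)%MS, (\rank F + \rank V)%N = \rank U
      & forall a, (F *m ract M a - ract N a *m F <= V)%MS].

Definition mod_iso (N N' : rmod) : Prop := @sq_iso N' 1%:M 0 N.
End Modules.

Section TorsionClass.
Variables (K : fieldType) (L : falgType K) (R : realType).
Variable G : rmod L -> Prop.

Definition inG (B : rmod L) (U V : 'M[K]_(rdim B)) : Prop :=
  exists N, G N /\ sq_iso U V N.

(* G is a torsion class: closed under isomorphisms, quotients, extensions. *)
Definition torsion_class : Prop :=
  [/\ forall N N' : rmod L, mod_iso N N' -> G N -> G N',
      forall (B : rmod L) (U : 'M[K]_(rdim B)),
        submod U -> G B -> inG 1%:M U
    & forall (B : rmod L) (U : 'M[K]_(rdim B)),
        submod U -> inG U 0 -> inG 1%:M U -> G B].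

Definition subobj (B : rmod L) (U : 'M[K]_(rdim B)) : Prop :=
  submod U /\ inG U 0.

Definition strict_sub (B : rmod L) (U : 'M[K]_(rdim B)) : Prop :=
  subobj U /\ forall U', subobj U' -> inG (U :&: U')%MS 0.

(* theta in V_Lambda = Hom(K_0(mod L), R): a real-valued function on modules,
   additive on short exact sequences 0 -> N1 -> B -> N2 -> 0. *)
Definition additive (theta : rmod L -> R) : Prop :=
  forall (B : rmod L) (U : 'M[K]_(rdim B)) (N1 N2 : rmod L),
    submod U -> sq_iso U 0 N1 -> sq_iso 1%:M U N2 ->
    theta B = theta N1 + theta N2.

Definition inD (theta : rmod L -> R) (X : rmod L) : Prop :=
  theta X = 0 /\
  forall (U : 'M[K]_(rdim X)) (N : rmod L),
    strict_sub U -> sq_iso U 0 N -> theta N <= 0.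

Definition inW (theta : rmod L -> R) (X : rmod L) : Prop := G X /\ inD theta X.

Definition inP (theta : rmod L -> R) (X : rmod L) : Prop :=
  G X /\
  forall (A : 'M[K]_(rdim X)) (N : rmod L),
    strict_sub A -> ~ (1%:M <= A)%MS -> sq_iso 1%:M A N -> 0 < theta N.

Definition smooth (f : R -> R) : Prop :=
  forall (k : nat) (x : R), derivable (derive1n k f) x 1.

Definition green_path (theta : R -> rmod L -> R) : Prop :=
  [/\ forall t, additive (theta t),
      forall N, smooth (fun t => theta t N),
      forall (t0 : R) (N : rmod L), G N -> (0 < rdim N)%N ->
        inD (theta t0) N -> 0 < derive1 (fun t => theta t N) t0,
      exists T : R, forall (t : R) (N : rmod L), T < t -> G N ->
        (0 < rdim N)%N -> 0 < theta t N
    & exists T' : R, forall (t : R) (N : rmod L), t < T' -> G N ->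
        (0 < rdim N)%N -> theta t N < 0].
End TorsionClass.

From Pilot Require Import Defs.
From HB Require Import structures.
From mathcomp Require Import all_boot all_order all_algebra.
From mathcomp Require Import falgebra.
From mathcomp Require Import all_classical all_reals all_analysis.
From mathcomp Require Import zify lra.
Import Order.TTheory GRing.Theory Num.Theory.
Local Open Scope ring_scope.
Set Implicit Arguments. Unset Strict Implicit. Unset Printing Implicit Defensive.

(* For a fixed module N, t |-> theta_t(N) is smooth, and the green condition says
   that it crosses 0 upwards whenever N lies in W(theta_t).  By induction on the
   dimension this propagates: if theta_s >= 0 on the strict quotients of N, then
   theta_t(N) > 0 for all t > s; if theta_s <= 0 on the strict subobjects of N, then
   theta_t(N) < 0 for all t < s.  Indeed, at the first zero r of theta_t(N) after
   (resp. before) s the derivative is <= 0, so N is not in W(theta_r); a strict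
   subobject W with theta_r(W) > 0 witnesses this, and the induction hypothesis for
   N/W (resp. W) contradicts additivity.  Hence W(theta_s) is contained in P(theta_t)
   for s < t, and P(theta_t) is closed under extending a module of P(theta_t) by such
   a quotient, so climbing the chain puts M in P(theta_t0) once all t_k < t_0.
   Conversely M/M_1 is a strict quotient of M in W(theta_t1), on which theta_t0 is
   <= 0 when t_0 <= t_1.

   A subquotient U/V of Y is identified with a module
   N through a basis F of a complement of V in U; then W |-> W F + V maps the
   submodules of N onto the submodules of Y between V and U, preserving subquotients,
   membership in G and strictness. *)

(** * Complements of row spaces *)

Section CongruenceModuloSpace.
Variables (K : fieldType) (m n p : nat) (C : 'M[K]_(p, n)).
Implicit Types a b c d : 'M[K]_(m, n).

Lemma submx_congr a b : (a - b <= C)%MS -> (a <= C)%MS = (b <= C)%MS.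
Proof.
move=> hab; apply/idP/idP => h.
  by rewrite -[b](subKr a) addmx_sub // eqmx_opp.
by rewrite -[a](subrK b) addmx_sub.
Qed.

Lemma submxB_sym a b : (a - b <= C)%MS -> (b - a <= C)%MS.
Proof. by rewrite -opprB eqmx_opp. Qed.

Lemma submxB_trans a b c : (a - b <= C)%MS -> (b - c <= C)%MS -> (a - c <= C)%MS.
Proof. by move=> hab hbc; rewrite -[a](subrK b) -addrA addmx_sub. Qed.

Lemma submxB_add a b c d :
  (a - b <= C)%MS -> (c - d <= C)%MS -> (a + c - (b + d) <= C)%MS.
Proof. by move=> hab hcd; rewrite opprD addrACA addmx_sub. Qed.

Lemma adds_congr a b : (a - b <= C)%MS -> (a + C :=: b + C)%MS.
Proof.
move=> hab; apply/eqmxP; rewrite !addsmx_sub !addsmxSr !andbT; apply/andP; split.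
  by rewrite -[a](subrK b) addmx_sub ?addsmxSl // (submx_trans hab) ?addsmxSr.
by rewrite -[b](subKr a) addmx_sub ?addsmxSl // eqmx_opp (submx_trans hab) ?addsmxSr.
Qed.

End CongruenceModuloSpace.

Definition compl_basis (K : fieldType) n r (U V : 'M[K]_n) (F : 'M[K]_(r, n)) :=
  [/\ row_free F, (F + V :=: U)%MS & (\rank F + \rank V)%N = \rank U].

Definition compl_coord (K : fieldType) n r p (F : 'M[K]_(r, n)) (V : 'M[K]_(p, n))
    m (x : 'M[K]_(m, n)) : 'M[K]_(m, r) :=
  lsubmx (x *m pinvmx (col_mx F V)).

Lemma compl_coordP (K : fieldType) n r p (F : 'M[K]_(r, n)) (V : 'M[K]_(p, n))
    m (x : 'M[K]_(m, n)) :
  (x <= F + V)%MS -> (x - compl_coord F V x *m F <= V)%MS.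
Proof.
rewrite addsmxE => /mulmxKpV xE; rewrite /compl_coord; set D := x *m _.
have -> : x = lsubmx D *m F + rsubmx D *m V by rewrite -mul_row_col hsubmxK.
by rewrite addrC addKr submxMl.
Qed.

Section ComplementBasis.
Variables (K : fieldType) (n r : nat) (U V : 'M[K]_n) (F : 'M[K]_(r, n)).
Hypothesis hFVU : compl_basis U V F.
Local Notation compl_coord := (compl_coord F V).

Lemma compl_coord_sub m (x : 'M[K]_(m, n)) : (x <= U)%MS -> (x - compl_coord x *m F <= V)%MS.
Proof. by case: hFVU => _ hFV _ hxU; apply: compl_coordP; rewrite hFV. Qed.

Lemma capmx_compl0 : (F :&: V)%MS = 0.
Proof.
case: hFVU => _ hFV hrk; apply/eqP; rewrite -mxrank_eq0.
by have := mxrank_sum_cap F V; rewrite hFV; lia.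
Qed.

Lemma compl_inj m (X : 'M[K]_(m, r)) : (X *m F <= V)%MS -> X = 0.
Proof.
move=> hXV; have : (X *m F <= F :&: V)%MS by rewrite sub_capmx submxMl.
rewrite capmx_compl0 submx0 => /eqP XF0.
by case: hFVU => hF _ _; apply: (row_free_inj hF); rewrite mul0mx.
Qed.

Lemma lift_submx m k (X : 'M[K]_(m, r)) (W : 'M[K]_(k, r)) :
  (X *m F <= W *m F + V)%MS = (X <= W)%MS.
Proof.
apply/idP/idP => [|hXW]; last by rewrite (submx_trans (submxMr F hXW)) ?addsmxSl.
rewrite addsmxE => /submxP [D XFE].
have XFE' : X *m F = lsubmx D *m W *m F + rsubmx D *m V.
  by rewrite XFE -{1}(hsubmxK D) mul_row_col mulmxA.
have : ((X - lsubmx D *m W) *m F <= V)%MS by rewrite mulmxBl XFE' addrC addKr submxMl.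
by move/compl_inj/eqP; rewrite subr_eq0 => /eqP ->; apply: submxMl.
Qed.

Lemma lift_sub k (W : 'M[K]_(k, r)) : (W *m F + V <= U)%MS.
Proof. by case: hFVU => _ hFV _; rewrite -hFV addsmxS ?submxMl. Qed.

Lemma submx_lift m k (x : 'M[K]_(m, n)) (W : 'M[K]_(k, r)) :
  (x <= U)%MS -> (x <= W *m F + V)%MS = (compl_coord x <= W)%MS.
Proof.
move=> hxU; rewrite -lift_submx; apply: submx_congr.
exact: submx_trans (compl_coord_sub hxU) (addsmxSr _ _).
Qed.

Lemma lift_coord (C : 'M[K]_n) :
  (V <= C)%MS -> (C <= U)%MS -> (<<compl_coord C>>%MS *m F + V :=: C)%MS.
Proof.
move=> hVC hCU; apply/eqmxP; rewrite (submx_lift _ hCU) genmxE submx_refl andbT.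
rewrite addsmx_sub hVC andbT (eqmxMr F (genmxE _)).
by rewrite -(submx_congr (submx_trans (compl_coord_sub hCU) hVC)).
Qed.

Lemma mxrank_lift k (W : 'M[K]_(k, r)) : \rank (W *m F + V)%MS = (\rank W + \rank V)%N.
Proof.
have WFV0 : (W *m F :&: V)%MS = 0.
  by apply/eqP; rewrite -submx0 -capmx_compl0 capmxS ?submxMl.
case: hFVU => hF _ _.
by have := mxrank_sum_cap (W *m F) V; rewrite WFV0 mxrank0 addn0 mxrankMfree.
Qed.

Lemma lift_cap (W1 W2 : 'M[K]_r) :
  ((W1 :&: W2)%MS *m F + V :=: (W1 *m F + V) :&: (W2 *m F + V))%MS.
Proof.
apply/eqmxP/andP; split.
  by rewrite sub_capmx !addsmx_sub !lift_submx capmxSl capmxSr !addsmxSr.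
have hU : ((W1 *m F + V) :&: (W2 *m F + V) <= U)%MS.
  exact: submx_trans (capmxSl _ _) (lift_sub _).
by rewrite (submx_lift _ hU) sub_capmx -!(submx_lift _ hU) capmxSl capmxSr.
Qed.

Lemma lift0mx : ((0 : 'M[K]_r) *m F + V :=: V)%MS.
Proof. by rewrite mul0mx; apply: adds0mx. Qed.

Lemma lift1mx : ((1%:M : 'M[K]_r) *m F + V :=: U)%MS.
Proof. by case: hFVU => _ hFV _; rewrite mul1mx. Qed.

Lemma lift_adds k1 k2 (A : 'M[K]_(k1, r)) (B : 'M[K]_(k2, r)) :
  ((A + B)%MS *m F + V :=: A *m F + (B *m F + V))%MS.
Proof. by rewrite addsmxA; apply: adds_eqmx (addsmxMr A B F) (eqmx_refl V). Qed.

Lemma lift_inj k1 k2 (A : 'M[K]_(k1, r)) (B : 'M[K]_(k2, r)) :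
  (A *m F + V :=: B *m F + V)%MS -> (A :=: B)%MS.
Proof.
move=> e; apply/eqmxP/andP; split; rewrite -lift_submx.
  by rewrite -e addsmxSl.
by rewrite e addsmxSl.
Qed.

Lemma compl_basis_lift s (H : 'M[K]_(s, r)) (W1 W2 : 'M[K]_r) :
  compl_basis W1 W2 H -> compl_basis (W1 *m F + V)%MS (W2 *m F + V)%MS (H *m F).
Proof.
case: hFVU => hF _ _ [hH eHW rk]; split.
- by rewrite /row_free mxrankMfree.
- exact: eqmx_trans (eqmx_sym (lift_adds H W2)) (adds_eqmx (eqmxMr F eHW) (eqmx_refl V)).
- by rewrite mxrankMfree // !mxrank_lift addnA rk.
Qed.

Lemma compl_basis_unlift s (H' : 'M[K]_(s, n)) (W1 W2 : 'M[K]_r) :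
  compl_basis (W1 *m F + V)%MS (W2 *m F + V)%MS H' -> compl_basis W1 W2 (compl_coord H').
Proof.
case=> hH' eH'W rkH'; set H := compl_coord H'.
have H'U : (H' <= U)%MS by rewrite (submx_trans _ (lift_sub W1)) // -eH'W addsmxSl.
have hd : (H *m F - H' <= W2 *m F + V)%MS.
  exact: submx_trans (submxB_sym (compl_coord_sub H'U)) (addsmxSr _ _).
have eHW : (H + W2 :=: W1)%MS.
  apply: lift_inj; apply: eqmx_trans (lift_adds H W2) _.
  exact: eqmx_trans (adds_congr hd) eH'W.
have rkW1 : \rank W1 = (s + \rank W2)%N.
  by move: rkH'; rewrite !mxrank_lift (eqP hH'); lia.
have rkH : \rank H = s.
  have := mxrank_sum_cap H W2; rewrite eHW rkW1.
  by have := rank_leq_row H; lia.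
by split; rewrite /row_free ?rkH // eHW.
Qed.

End ComplementBasis.

(** * Modules and subquotients *)

Section Modules.
Variables (K : fieldType) (L : falgType K).
Implicit Types Y N : rmod L.

Lemma submod_eqmx Y (A B : 'M[K]_(rdim Y)) : (A :=: B)%MS -> submod A -> submod B.
Proof. by move=> eAB hA a; rewrite -eAB (submx_trans _ (hA a)) // (eqmxMr _ eAB). Qed.

Lemma submod0 Y : submod (0 : 'M[K]_(rdim Y)).
Proof. by move=> a; rewrite mul0mx sub0mx. Qed.

Lemma submod1 Y : submod (1%:M : 'M[K]_(rdim Y)).
Proof. by move=> a; rewrite submx1. Qed.

Lemma submod_cap Y (A B : 'M[K]_(rdim Y)) :
  submod A -> submod B -> submod (A :&: B)%MS.
Proof.
move=> hA hB a; rewrite sub_capmx.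
by rewrite (submx_trans (submxMr _ (capmxSl _ _)) (hA a)) (submx_trans (submxMr _ (capmxSr _ _)) (hB a)).
Qed.

Lemma submod_adds Y (A B : 'M[K]_(rdim Y)) :
  submod A -> submod B -> submod (A + B)%MS.
Proof.
move=> hA hB a; rewrite addsmxMr addsmx_sub.
by rewrite (submx_trans (hA a) (addsmxSl _ _)) (submx_trans (hB a) (addsmxSr _ _)).
Qed.

Definition iso_frame Y N (U V : 'M[K]_(rdim Y)) (F : 'M[K]_(rdim N, rdim Y)) :=
  compl_basis U V F /\ forall a, (F *m ract Y a - ract N a *m F <= V)%MS.
Arguments iso_frame {Y} N U V F.

Lemma sq_isoP Y N (U V : 'M[K]_(rdim Y)) : sq_iso U V N <-> exists F, iso_frame N U V F.
Proof. by split=> [[F [? ? ? ?]]|[F [[? ? ?] ?]]]; exists F. Qed.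

Lemma sq_iso_eqmx Y N (U U' V V' : 'M[K]_(rdim Y)) :
  (U :=: U')%MS -> (V :=: V')%MS -> sq_iso U V N -> sq_iso U' V' N.
Proof.
move=> eU eV [F [hF hFV hrk hact]]; exists F; split=> //.
- exact: eqmx_trans (adds_eqmx (eqmx_refl F) (eqmx_sym eV)) (eqmx_trans hFV eU).
- by rewrite -eU -eV.
- by move=> a; rewrite -eV.
Qed.

Lemma sq_iso_rank Y N (U V : 'M[K]_(rdim Y)) :
  sq_iso U V N -> \rank U = (rdim N + \rank V)%N.
Proof. by case=> F [hF _ <- _]; rewrite (eqP hF). Qed.

Lemma sq_iso_sub Y N (U V : 'M[K]_(rdim Y)) : sq_iso U V N -> (V <= U)%MS.
Proof. by case=> F [_ hFV _ _]; rewrite -hFV addsmxSr. Qed.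

Lemma sq_iso_dim0 Y N (V : 'M[K]_(rdim Y)) : rdim N = 0%N -> sq_iso V V N.
Proof.
move=> N0; exists 0; split.
- by rewrite /row_free mxrank0 N0.
- exact: adds0mx.
- by rewrite mxrank0.
- by move=> a; rewrite mul0mx mulmx0 subrr sub0mx.
Qed.

Lemma sq_iso_id N : sq_iso (1%:M : 'M[K]_(rdim N)) 0 N.
Proof.
exists 1%:M; split.
- by rewrite /row_free mxrank1.
- exact: addsmx0.
- by rewrite mxrank0 addn0.
- by move=> a; rewrite mulmx1 mul1mx subrr sub0mx.
Qed.

Lemma sq_iso_adds Y N (A B : 'M[K]_(rdim Y)) :
  sq_iso A (A :&: B)%MS N -> sq_iso (A + B)%MS B N.
Proof.
case=> F [hF hFV hrk hact]; exists F; split => //.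
- apply/eqmxP; rewrite !addsmx_sub !addsmxSr !andbT.
  rewrite (submx_trans _ (addsmxSl A B)) -?hFV ?addsmxSl //=.
  by rewrite addsmx_sub addsmxSl (submx_trans (capmxSr A B) (addsmxSr _ _)).
- by have := mxrank_sum_cap A B; lia.
- by move=> a; apply: submx_trans (hact a) (capmxSr _ _).
Qed.

Section Subquotient.
Variables (Y : rmod L) (U V : 'M[K]_(rdim Y)).
Hypotheses (hU : submod U) (hV : submod V) (hVU : (V <= U)%MS).

Let F := row_base (U :\: V)%MS.

Let hFVU : compl_basis U V F.
Proof.
have eUV : (U :&: V :=: V)%MS by apply/capmx_idPr.
split; first exact: row_base_free.
  exact: eqmx_trans (adds_eqmx (eq_row_base _) (eqmx_sym eUV)) (addsmx_diff_cap_eq U V).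
by have := mxrank_cap_compl U V; rewrite eUV eq_row_base; lia.
Qed.

Let act a := compl_coord F V (F *m ract Y a).

Let actP a : (F *m ract Y a - act a *m F <= V)%MS.
Proof.
case: hFVU => _ hFV _; apply: compl_coordP; rewrite hFV.
by apply: submx_trans (hU a); apply: submxMr; rewrite -hFV addsmxSl.
Qed.

Let act_uniq a (X : 'M[K]_(\rank (U :\: V))) :
  (F *m ract Y a - X *m F <= V)%MS -> act a = X.
Proof.
move=> hX; apply/eqP; rewrite -subr_eq0; apply/eqP; apply: (compl_inj hFVU).
by rewrite mulmxBl (submxB_trans (submxB_sym (actP a)) hX).
Qed.

Let actD a b : act (a + b) = act a + act b.
Proof.
by apply: act_uniq; rewrite ractD mulmxDr mulmxDl submxB_add.
Qed.

Let actZ (c : K) a : act (c *: a) = c *: act a.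
Proof.
by apply: act_uniq; rewrite ractZ -scalemxAr -scalemxAl -scalerBr scalemx_sub.
Qed.

Let act1 : act 1 = 1%:M.
Proof. by apply: act_uniq; rewrite ract1 mulmx1 mul1mx subrr sub0mx. Qed.

Let actM a b : act (a * b) = act a *m act b.
Proof.
apply: act_uniq; rewrite ractM mulmxA; apply: (submxB_trans (b := act a *m F *m ract Y b)).
  by rewrite -mulmxBl (submx_trans (submxMr _ (actP a)) (hV b)).
rewrite -(mulmxA (act a) F) -(mulmxA (act a) (act b)) -mulmxBr.
exact: submx_trans (submxMl _ _) (actP b).
Qed.

Lemma exists_subquot : exists N, sq_iso U V N.
Proof.
exists (@RMod K L _ act actD actZ act1 actM); apply/sq_isoP.
by exists F; split.
Qed.

End Subquotient.

Section IsoFrame.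
Variables (Y N : rmod L) (U V : 'M[K]_(rdim Y)) (F : 'M[K]_(rdim N, rdim Y)).
Hypotheses (hF : iso_frame N U V F) (hV : submod V).

Local Notation lift W := (W *m F + V)%MS.

Let hFVU : compl_basis U V F := hF.1.

Let ract_congr k (X : 'M[K]_(k, rdim N)) a :
  (X *m F *m ract Y a - X *m ract N a *m F <= V)%MS.
Proof. by rewrite -!mulmxA -mulmxBr (submx_trans (submxMl _ _) (hF.2 a)). Qed.

Let ract_lift_congr (N' : rmod L) (H : 'M[K]_(rdim N', rdim N)) a :
  (H *m F *m ract Y a - ract N' a *m (H *m F) - (H *m ract N a - ract N' a *m H) *m F
    <= V)%MS.
Proof. by rewrite mulmxBl !mulmxA opprB addrA subrK ract_congr. Qed.

Lemma submod_lift (W : 'M[K]_(rdim N)) : submod W <-> submod (lift W).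
Proof.
suff liftE a : (lift W *m ract Y a <= lift W)%MS = (W *m ract N a <= W)%MS.
  by split=> hW a; rewrite ?liftE // -liftE.
rewrite addsmxMr addsmx_sub (submx_trans (hV a) (addsmxSr _ _)) andbT.
by rewrite (submx_congr (submx_trans (ract_congr W a) (addsmxSr _ _))) (lift_submx hFVU).
Qed.

Lemma lift_onto (C : 'M[K]_(rdim Y)) : submod C -> (V <= C)%MS -> (C <= U)%MS ->
  exists2 W : 'M[K]_(rdim N), submod W & (lift W :=: C)%MS.
Proof.
move=> hC hVC hCU; have eC := lift_coord hFVU hVC hCU.
by exists <<compl_coord F V C>>%MS => //; apply/submod_lift; apply: submod_eqmx (eqmx_sym eC) hC.
Qed.

Lemma sq_iso_lift (W1 W2 : 'M[K]_(rdim N)) (N' : rmod L) :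
  sq_iso W1 W2 N' -> sq_iso (lift W1) (lift W2) N'.
Proof.
case/sq_isoP=> H [hH hact]; apply/sq_isoP; exists (H *m F); split.
  exact (compl_basis_lift hFVU hH).
move=> a; rewrite (submx_congr (submx_trans (ract_lift_congr H a) (addsmxSr _ _))).
by rewrite (lift_submx hFVU).
Qed.

Lemma sq_iso_unlift (W1 W2 : 'M[K]_(rdim N)) (N' : rmod L) :
  sq_iso (lift W1) (lift W2) N' -> sq_iso W1 W2 N'.
Proof.
case/sq_isoP=> H' [hH' hact']; apply/sq_isoP; exists (compl_coord F V H'); split.
  exact (compl_basis_unlift hFVU hH').
set H := compl_coord F V H' => a.
have H'U : (H' <= U)%MS.
  by case: hH' => _ eH'W _; rewrite (submx_trans _ (lift_sub hFVU W1)) // -eH'W addsmxSl.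
have hd := compl_coord_sub hFVU H'U.
have HFH' : (H *m F *m ract Y a - ract N' a *m (H *m F) - (H' *m ract Y a - ract N' a *m H')
    <= V)%MS.
  apply: submxB_add; first by rewrite -mulmxBl (submx_trans (submxMr _ (submxB_sym hd)) (hV a)).
  by rewrite opprK addrC -mulmxBr (submx_trans (submxMl _ _) hd).
rewrite -(lift_submx hFVU _ W2) (submx_congr (b := H' *m ract Y a - ract N' a *m H')) //.
exact: submx_trans (submxB_trans (submxB_sym (ract_lift_congr H a)) HFH') (addsmxSr _ _).
Qed.

End IsoFrame.

End Modules.
Arguments iso_frame {K L Y} N U V F.

Section AdditiveFunction.
Variables (K : fieldType) (L : falgType K) (R : realType) (th : rmod L -> R).
Hypothesis hth : Defs.additive th.
Implicit Types Y N : rmod L.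

Lemma additive_dim0 N : rdim N = 0%N -> th N = 0.
Proof.
move=> N0; have e10 : (1%:M : 'M[K]_(rdim N)) = 0.
  by apply/eqP; rewrite -mxrank_eq0 mxrank1 N0.
have h1 : sq_iso (1%:M : 'M[K]_(rdim N)) 0 N by rewrite e10; apply: sq_iso_dim0.
by have := hth (submod0 N) (sq_iso_dim0 _ N0) h1; lra.
Qed.

Lemma additive_sq_iso Y N1 N2 (U V : 'M[K]_(rdim Y)) :
  submod V -> sq_iso U V N1 -> sq_iso U V N2 -> th N1 = th N2.
Proof.
move=> hV /sq_isoP [F hF] hN2.
have hN2' : sq_iso (1%:M : 'M[K]_(rdim N1)) 0 N2.
  apply: (sq_iso_unlift hF hV).
  exact: sq_iso_eqmx (eqmx_sym (lift1mx hF.1)) (eqmx_sym (lift0mx _ _)) hN2.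
have [N0 hN0] := exists_subquot (submod0 N1) (submod0 N1) (submx_refl 0).
have N00 : rdim N0 = 0%N by have := sq_iso_rank hN0; lia.
by rewrite (hth (submod0 N1) hN0 hN2') additive_dim0 ?add0r.
Qed.

Lemma additive_subquot0 Y N (U V : 'M[K]_(rdim Y)) :
  sq_iso U V N -> (U <= V)%MS -> th N = 0.
Proof.
move=> hN hUV; apply: additive_dim0.
by have := sq_iso_rank hN; have := mxrankS hUV; have := mxrankS (sq_iso_sub hN); lia.
Qed.

Lemma additive_subquot Y N0 N1 N2 (U V W : 'M[K]_(rdim Y)) :
  submod V -> submod W -> (V <= W)%MS -> (W <= U)%MS ->
  sq_iso U V N0 -> sq_iso W V N1 -> sq_iso U W N2 -> th N0 = th N1 + th N2.
Proof.
move=> hV hW hVW hWU /sq_isoP [F hF] hN1 hN2.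
have [Wn hWn eW] := lift_onto hF hV hW hVW hWU.
apply: (hth hWn); apply: (sq_iso_unlift hF hV).
  exact: sq_iso_eqmx (eqmx_sym eW) (eqmx_sym (lift0mx _ _)) hN1.
exact: sq_iso_eqmx (eqmx_sym (lift1mx hF.1)) (eqmx_sym eW) hN2.
Qed.

End AdditiveFunction.

(** * Torsion classes and strict subobjects *)

Section TorsionClass.
Variables (K : fieldType) (L : falgType K) (G : rmod L -> Prop).
Implicit Types Y N : rmod L.

Lemma inG_eqmx Y (U U' V V' : 'M[K]_(rdim Y)) :
  (U :=: U')%MS -> (V :=: V')%MS -> inG G U V -> inG G U' V'.
Proof. by move=> eU eV [N [GN hN]]; exists N; split; last exact: sq_iso_eqmx hN. Qed.

(* [W / V] is a strict subobject of [U / V]. *)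
Definition rel_strict Y (U V W : 'M[K]_(rdim Y)) : Prop :=
  [/\ submod W, (V <= W)%MS, (W <= U)%MS, inG G W V &
      forall C, submod C -> (V <= C)%MS -> (C <= U)%MS -> inG G C V ->
        inG G (W :&: C)%MS V].

Lemma strict_subE Y (W : 'M[K]_(rdim Y)) : strict_sub G W <-> rel_strict 1%:M 0 W.
Proof.
split=> [[[hW GW] hS]|[hW _ _ GW hS]]; last first.
  by split=> // C [hC GC]; apply: hS; rewrite ?sub0mx ?submx1.
by split; rewrite ?sub0mx ?submx1 // => C hC _ _ GC; apply: hS.
Qed.

Lemma rel_strict_eqmx Y (U V W W' : 'M[K]_(rdim Y)) :
  (W :=: W')%MS -> rel_strict U V W -> rel_strict U V W'.
Proof.
move=> eW [hW hVW hWU GW hS]; split; rewrite -?eW //.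
- exact: submod_eqmx hW.
- exact: inG_eqmx eW (eqmx_refl V) GW.
- move=> C hC hVC hCU GC; apply: inG_eqmx (hS C hC hVC hCU GC).
    exact: cap_eqmx eW (eqmx_refl C).
  exact: eqmx_refl.
Qed.

Lemma rel_strict_eqmxl Y (U U' V W : 'M[K]_(rdim Y)) :
  (U :=: U')%MS -> rel_strict U V W -> rel_strict U' V W.
Proof.
move=> eU [hW hVW hWU GW hS]; split; rewrite -?eU // => C hC hVC hCU GC.
by apply: hS; rewrite ?eU.
Qed.

Section IsoFrame.
Variables (Y N : rmod L) (U V : 'M[K]_(rdim Y)) (F : 'M[K]_(rdim N, rdim Y)).
Hypotheses (hF : iso_frame N U V F) (hV : submod V).

Local Notation lift W := (W *m F + V)%MS.

Lemma inG_lift (W1 W2 : 'M[K]_(rdim N)) : inG G W1 W2 <-> inG G (lift W1) (lift W2).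
Proof.
split=> -[N' [GN' hN']]; exists N'; split=> //.
  exact: (sq_iso_lift hF hN').
exact: (sq_iso_unlift hF hV hN').
Qed.

Lemma rel_strict_lift (W : 'M[K]_(rdim N)) : strict_sub G W <-> rel_strict U V (lift W).
Proof.
have GE W1 : inG G W1 0 <-> inG G (lift W1) V.
  rewrite inG_lift; split; apply: inG_eqmx (eqmx_refl _) _; first exact: lift0mx.
  exact: eqmx_sym (lift0mx V F).
split=> [[[hW GW] hS]|[hW _ _ GW hS]].
  split; rewrite ?addsmxSr ?(lift_sub hF.1) //; first exact/(submod_lift hF hV).
    exact/GE.
  move=> C hC hVC hCU GC; have [Cn hCn eC] := lift_onto hF hV hC hVC hCU.
  have GCn : inG G Cn 0 by apply/GE; apply: inG_eqmx (eqmx_sym eC) (eqmx_refl V) GC.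
  apply: inG_eqmx _ (eqmx_refl V) ((GE _).1 (hS Cn (conj hCn GCn))).
  exact: eqmx_trans (lift_cap hF.1 W Cn) (cap_eqmx (eqmx_refl _) eC).
split; first split.
- exact/(submod_lift hF hV).
- exact/GE.
- move=> Cn [hCn GCn]; apply/GE; apply: inG_eqmx (eqmx_sym (lift_cap hF.1 W Cn)) (eqmx_refl V) _.
  apply: hS; rewrite ?addsmxSr ?(lift_sub hF.1) //; first exact/(submod_lift hF hV).
  exact/GE.
Qed.

End IsoFrame.

Hypothesis hG : torsion_class G.

Lemma inGxx Y0 Y (V : 'M[K]_(rdim Y)) : G Y0 -> inG G V V.
Proof.
case: hG => _ hquot _ GY0; have [N [GN hN]] := hquot Y0 1%:M (submod1 Y0) GY0.
by exists N; split; last by apply: sq_iso_dim0; have := sq_iso_rank hN; lia.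
Qed.

Lemma inG_quot Y (U V W : 'M[K]_(rdim Y)) :
  submod V -> submod W -> (V <= W)%MS -> (W <= U)%MS -> inG G U V -> inG G U W.
Proof.
case: hG => _ hquot _ hV hW hVW hWU [N0 [GN0 /sq_isoP [F hF]]].
have [Wn hWn eW] := lift_onto hF hV hW hVW hWU.
have /(inG_lift hF hV) := hquot N0 Wn hWn GN0.
exact: inG_eqmx (lift1mx hF.1) eW.
Qed.

Lemma inG_ext Y (U V W : 'M[K]_(rdim Y)) :
  submod U -> submod V -> submod W -> (V <= W)%MS -> (W <= U)%MS ->
  inG G W V -> inG G U W -> inG G U V.
Proof.
case: hG => _ _ hext hU hV hW hVW hWU GWV GUW.
have [N0 hN0] := exists_subquot hU hV (submx_trans hVW hWU).
have /sq_isoP [F hF] := hN0.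
have [Wn hWn eW] := lift_onto hF hV hW hVW hWU.
exists N0; split=> //; apply: hext hWn _ _; apply/(inG_lift hF hV).
  exact: inG_eqmx (eqmx_sym eW) (eqmx_sym (lift0mx _ _)) GWV.
exact: inG_eqmx (eqmx_sym (lift1mx hF.1)) (eqmx_sym eW) GUW.
Qed.

Lemma inG_cap_adds Y (A B : 'M[K]_(rdim Y)) :
  submod A -> submod B -> inG G (A + B)%MS B -> inG G A (A :&: B)%MS.
Proof.
case: hG => hiso _ _ hA hB [N [GN hN]].
have [N' hN'] := exists_subquot hA (submod_cap hA hB) (capmxSl A B).
have /sq_isoP [F hF] := sq_iso_adds hN'.
exists N'; split=> //; apply: hiso GN; apply: (sq_iso_unlift hF hB).
exact: sq_iso_eqmx (eqmx_sym (lift1mx hF.1)) (eqmx_sym (lift0mx _ _)) hN.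
Qed.

Lemma inG_adds Y (V A B : 'M[K]_(rdim Y)) :
  submod V -> submod A -> submod B -> (V <= A :&: B)%MS -> inG G A V -> inG G (A + B)%MS B.
Proof.
move=> hV hA hB hVAB GAV.
have [N [GN hN]] := inG_quot hV (submod_cap hA hB) hVAB (capmxSl A B) GAV.
by exists N; split; last exact: sq_iso_adds.
Qed.

Lemma rel_strict_top Y (U V : 'M[K]_(rdim Y)) :
  submod U -> (V <= U)%MS -> inG G U V -> rel_strict U V U.
Proof.
move=> hU hVU GUV; split=> // C hC hVC hCU GC.
exact: inG_eqmx (eqmx_sym (capmx_idPr hCU)) (eqmx_refl V) GC.
Qed.

Lemma rel_strict_bot Y0 Y (U V : 'M[K]_(rdim Y)) :
  G Y0 -> submod V -> (V <= U)%MS -> rel_strict U V V.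
Proof.
move=> GY0 hV hVU; split=> //; first exact: inGxx GY0.
move=> C hC hVC hCU GC.
exact: inG_eqmx (eqmx_sym (capmx_idPl hVC)) (eqmx_refl V) (inGxx _ GY0).
Qed.

Lemma rel_strict_trans Y (U V W W' : 'M[K]_(rdim Y)) :
  rel_strict U V W -> rel_strict W V W' -> rel_strict U V W'.
Proof.
move=> [hW hVW hWU GW hS] [hW' hVW' hW'W GW' hS']; split=> //.
  exact: submx_trans hW'W hWU.
move=> C hC hVC hCU GC.
have hVWC : (V <= W :&: C)%MS by rewrite sub_capmx hVW hVC.
have := hS' _ (submod_cap hW hC) hVWC (capmxSl _ _) (hS C hC hVC hCU GC).
apply: inG_eqmx (eqmx_refl V); rewrite capmxA.
exact: cap_eqmx (capmx_idPl hW'W) (eqmx_refl C).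
Qed.

Lemma rel_strict_quot Y (U V W W' : 'M[K]_(rdim Y)) :
  submod V -> rel_strict U V W -> rel_strict U W W' -> rel_strict U V W'.
Proof.
move=> hV [hW hVW hWU GW hS] [hW' hWW' hW'U GW' hS'].
have hVW' := submx_trans hVW hWW'.
split=> //; first exact: inG_ext hW' hV hW hVW hWW' GW GW'.
move=> C hC hVC hCU GC.
have hCW' := submod_cap hC hW'.
have GWC : inG G (W :&: C)%MS V by apply: hS.
have GCW : inG G (C + W)%MS W.
  by apply: (inG_adds hV hC hW _ GC); rewrite sub_capmx hVC.
have GCW'W : inG G (C :&: W' + W)%MS W.
  apply: inG_eqmx (eqmx_refl W) (hS' _ (submod_adds hC hW) (addsmxSr _ _) _ GCW); last first.
    by rewrite addsmx_sub hCU.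
  by rewrite capmxC addsmxC [(_ + W)%MS]addsmxC; apply: eqmx_sym; apply: matrix_modl.
have eWC : ((C :&: W') :&: W :=: W :&: C)%MS.
  apply/eqmxP/andP; split.
    by rewrite !sub_capmx capmxSr /= (submx_trans (capmxSl _ _) (capmxSl _ _)).
  by rewrite !sub_capmx capmxSl capmxSr /= (submx_trans (capmxSl _ _) hWW').
have GCW'_WC := inG_eqmx (eqmx_refl _) eWC (inG_cap_adds hCW' hW GCW'W).
rewrite capmxC; apply: (inG_ext hCW' hV (submod_cap hW hC) _ _ GWC GCW'_WC).
  by rewrite sub_capmx hVW hVC.
by rewrite sub_capmx capmxSr (submx_trans (capmxSl _ _) hWW').
Qed.

Lemma rel_strict_cap Y (X A B : 'M[K]_(rdim Y)) :
  rel_strict X 0 B -> submod A -> (A <= X)%MS -> inG G A 0 -> rel_strict A 0 (A :&: B)%MS.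
Proof.
move=> [hB _ hBX GB hS] hA hAX GA.
split; rewrite ?sub0mx ?capmxSl //; first exact: submod_cap.
  by rewrite capmxC; apply: (hS A hA (sub0mx _ _) hAX GA).
move=> C hC _ hCA GC; apply: inG_eqmx _ (eqmx_refl 0) (hS C hC (sub0mx _ _) (submx_trans hCA hAX) GC).
apply/eqmxP/andP; split.
  by rewrite !sub_capmx capmxSl capmxSr (submx_trans (capmxSr _ _) hCA).
by rewrite sub_capmx capmxSr (submx_trans (capmxSl _ _) (capmxSr _ _)).
Qed.

Lemma rel_strict_adds Y (X A B : 'M[K]_(rdim Y)) :
  rel_strict X 0 B -> submod A -> (A <= X)%MS -> inG G A 0 -> rel_strict X A (A + B)%MS.
Proof.
move=> [hB _ hBX GB hS] hA hAX GA.
have GadsA D : submod D -> inG G D 0 -> inG G (D + A)%MS A.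
  by move=> hD; apply: (inG_adds (submod0 Y) hD hA (sub0mx _ _)).
split; rewrite ?addsmxSl ?addsmx_sub ?hAX //; first exact: submod_adds.
  by rewrite addsmxC; apply: GadsA.
move=> C hC hAC hCX GC.
have GC0 := inG_ext hC (submod0 Y) hA (sub0mx _ _) hAC GA GC.
have GBC := hS C hC (sub0mx _ _) hCX GC0.
apply: inG_eqmx _ (eqmx_refl A) (GadsA _ (submod_cap hB hC) GBC).
by rewrite addsmxC; apply: matrix_modl.
Qed.

End TorsionClass.

(** * Zeros of real functions *)

Section SignChange.
Import numFieldNormedType.Exports.
Variable R : realType.
Implicit Types (g : R -> R) (a b r s t u v x : R).
Local Open Scope classical_set_scope.

Lemma continuous_gt0_near g x : {for x, continuous g} -> 0 < g x ->
  exists2 e : R, 0 < e & forall u, `|u - x| < e -> 0 < g u.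
Proof.
move=> cg gx0; have /nbhs_ballP [e e0 he] := @cvgr_gt _ _ _ (nbhs_filter x) g (g x) cg 0 gx0.
by exists e => // u hu; apply: he; rewrite /ball /= distrC.
Qed.

Lemma continuous_lt0_near g x : {for x, continuous g} -> g x < 0 ->
  exists2 e : R, 0 < e & forall u, `|u - x| < e -> g u < 0.
Proof.
move=> cg gx0; have /nbhs_ballP [e e0 he] := @cvgr_lt _ _ _ (nbhs_filter x) g (g x) cg 0 gx0.
by exists e => // u hu; apply: he; rewrite /ball /= distrC.
Qed.

Lemma derive1_gt0_sign g x : derivable g x 1 -> 0 < g^`() x -> g x = 0 ->
  exists2 e : R, 0 < e &
    forall u, `|u - x| < e -> (x < u -> 0 < g u) /\ (u < x -> g u < 0).
Proof.
move=> dg dg0 gx0.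
have quot : (fun h => h^-1 * (g (h + x) - g x)) @ 0^' --> g^`() x.
  move: dg; rewrite derive1E /derivable /derive.
  set q1 := fun h => h^-1 *: _; set q2 := fun h => h^-1 * _.
  suff -> : q1 = q2 by [].
  by apply/funext => h; rewrite /q1 /q2 /=; congr (_ * (g (_ + _) - _)); apply: mulr1.
have := @cvgr_gt _ _ _ _ _ _ quot 0 dg0.
move=> /(_ (Proper_dnbhs_numFieldType (0 : R))) /nbhs_ballP [e e0 he].
exists e => // u hu; have := he (u - x); rewrite /ball /= sub0r normrN subrK gx0 subr0.
move=> /(_ hu) hq; split=> [xu|ux].
  by move: hq; rewrite subr_eq0 gt_eqF // => /(_ isT); rewrite pmulr_rgt0 // invr_gt0 subr_gt0.
by move: hq; rewrite subr_eq0 lt_eqF // => /(_ isT); rewrite nmulr_rgt0 // invr_lt0 subr_lt0.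
Qed.

(* [r] is the supremum of the points up to which [g] stays positive. *)
Lemma first_zero g a b : continuous g -> a < b -> 0 < g a -> g b <= 0 ->
  exists r, [/\ a < r, r <= b, g r = 0 & forall u, a <= u -> u < r -> 0 < g u].
Proof.
move=> cg ab ga gb.
set S := [set u | a <= u <= b /\ forall v, a <= v -> v <= u -> 0 < g v].
have Sa : S a.
  split; first by rewrite lexx ltW.
  by move=> v av va; have -> : v = a by apply/eqP; rewrite eq_le va av.
have hS : has_sup S by split; [exists a | exists b => u [/andP []]].
set r := sup S; have ar : a <= r := sup_upper_bound hS Sa.
have rb : r <= b by apply: ge_sup; [exists a | move=> u [/andP []]].
have gpos u : a <= u -> u < r -> 0 < g u.
  move=> au ur; have ru : 0 < r - u by rewrite subr_gt0.
  have [v [_ Sv]] := sup_adherent ru hS; rewrite -/r => uv.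
  by apply: Sv => //; rewrite ltW //; lra.
have ar' : a < r.
  rewrite lt_neqAle ar andbT; apply/eqP => eAr.
  have [e e0 he] := continuous_gt0_near (cg a) ga.
  have Sae : S (Order.min b (a + e / 2)).
    split; first by rewrite le_min ge_min lexx (ltW ab) /=; lra.
    move=> v av; rewrite le_min => /andP [_ ve]; apply: he.
    by rewrite ger0_norm ?subr_ge0 //; lra.
  by have := sup_upper_bound hS Sae; rewrite -/r -eAr lt_geF // lt_min ab; lra.
exists r; split=> //; apply/eqP; rewrite eq_le; apply/andP; split.
  rewrite leNgt; apply/negP => gr.
  have [e e0 he] := continuous_gt0_near (cg r) gr.
  have rb' : r < b by rewrite lt_neqAle rb andbT; apply/eqP => rbE; move: gb; rewrite -rbE; lra.
  have Sre : S (Order.min b (r + e / 2)).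
    split; first by rewrite le_min ge_min lexx (ltW ab) /=; lra.
    move=> v av; rewrite le_min => /andP [_ ve].
    have [vr|rv] := ltP v r; first exact: gpos.
    by apply: he; rewrite ger0_norm ?subr_ge0 //; lra.
  by have := sup_upper_bound hS Sre; rewrite -/r ge_min => /orP []; lra.
rewrite leNgt; apply/negP => gr.
have [e e0 he] := continuous_lt0_near (cg r) gr.
set u := Order.max a (r - e / 2).
have au : a <= u by rewrite le_max lexx.
have ur : u < r by rewrite gt_max ar' /=; lra.
have ru : r - e / 2 <= u by rewrite le_max lexx orbT.
have := gpos u au ur; have := he u; rewrite ler0_norm ?subr_le0 ?ltW //; lra.
Qed.

End SignChange.

Section DerivableSignChange.
Import numFieldNormedType.Exports.
Variables (R : realType) (g : R -> R).
Hypothesis dg : forall x, derivable g x 1.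
Implicit Types (r s t u x : R).
Local Open Scope classical_set_scope.

Let cg : continuous g.
Proof. by move=> x; apply/differentiable_continuous/derivable1_diffP. Qed.

Lemma gt0_right_near s : 0 <= g s -> (g s = 0 -> 0 < g^`() s) ->
  exists2 d : R, 0 < d & forall u, s < u -> u < s + d -> 0 < g u.
Proof.
move=> gs dgs; have [gsp|gsn] := ltP 0 (g s).
  have [e e0 he] := continuous_gt0_near (@cg s) gsp.
  by exists e => // u su us; apply: he; rewrite ger0_norm ?subr_ge0 ?ltW //; lra.
have gs0 : g s = 0 by lra.
have [e e0 he] := derive1_gt0_sign (@dg s) (dgs gs0) gs0.
by exists e => // u su us; apply: (he u _).1; rewrite ?ger0_norm ?subr_ge0 ?ltW //; lra.
Qed.

Lemma lt0_left_near s : g s <= 0 -> (g s = 0 -> 0 < g^`() s) ->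
  exists2 d : R, 0 < d & forall u, s - d < u -> u < s -> g u < 0.
Proof.
move=> gs dgs; have [gsn|gsp] := ltP (g s) 0.
  have [e e0 he] := continuous_lt0_near (@cg s) gsn.
  by exists e => // u su us; apply: he; rewrite ler0_norm ?subr_le0 ?ltW //; lra.
have gs0 : g s = 0 by lra.
have [e e0 he] := derive1_gt0_sign (@dg s) (dgs gs0) gs0.
by exists e => // u su us; apply: (he u _).2; rewrite ?ler0_norm ?subr_le0 ?ltW //; lra.
Qed.

Lemma zero_derive1_le0_after s t :
  s < t -> 0 <= g s -> (g s = 0 -> 0 < g^`() s) -> g t <= 0 ->
  exists r, [/\ s < r, g r = 0 & g^`() r <= 0].
Proof.
move=> st gs dgs gt; have [d d0 hd] := gt0_right_near gs dgs.
pose a := s + Order.min d (t - s) / 2.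
have [sa at' ga] : [/\ s < a, a < t & 0 < g a].
  have m0 : 0 < Order.min d (t - s) by rewrite lt_min d0 subr_gt0.
  have md : Order.min d (t - s) <= d by rewrite ge_min lexx.
  have mt : Order.min d (t - s) <= t - s by rewrite ge_min lexx orbT.
  by split; rewrite /a; [lra | lra | apply: hd; lra].
have [r [ar _ gr0 gpos]] := first_zero cg at' ga gt.
exists r; split=> //; first exact: lt_trans ar.
rewrite leNgt; apply/negP => dgr.
have [e e0 he] := derive1_gt0_sign (@dg r) dgr gr0.
pose u := Order.max a (r - e / 2).
have au : a <= u by rewrite le_max lexx.
have ur : u < r by rewrite gt_max ar /=; lra.
have ru : r - e / 2 <= u by rewrite le_max lexx orbT.
have hu : `|u - r| < e by rewrite ler0_norm ?subr_le0 ?ltW //; lra.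
by have := gpos u au ur; have := (he u hu).2 ur; lra.
Qed.

Lemma zero_derive1_le0_before s t :
  t < s -> g s <= 0 -> (g s = 0 -> 0 < g^`() s) -> 0 <= g t ->
  exists r, [/\ r < s, g r = 0 & g^`() r <= 0].
Proof.
move=> ts gs dgs gt; have [d d0 hd] := lt0_left_near gs dgs.
pose b := s - Order.min d (s - t) / 2.
have [bs tb gb] : [/\ b < s, t < b & g b < 0].
  have m0 : 0 < Order.min d (s - t) by rewrite lt_min d0 subr_gt0.
  have md : Order.min d (s - t) <= d by rewrite ge_min lexx.
  have mt : Order.min d (s - t) <= s - t by rewrite ge_min lexx orbT.
  by split; rewrite /b; [lra | lra | apply: hd; lra].
(* [first_zero] applied to [u |-> - g (- u)] finds the last zero of [g] before [b]. *)
pose f u := - g (- u).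
have cf : continuous f.
  by move=> x; apply: continuousN; apply: continuous_comp; [apply: opp_continuous | apply: cg].
have fb : 0 < f (- b) by rewrite /f opprK oppr_gt0.
have ft : f (- t) <= 0 by rewrite /f opprK oppr_le0.
have bt : - b < - t by rewrite ltrN2.
have [r [br _ fr0 fpos]] := first_zero cf bt fb ft.
have gr0 : g (- r) = 0 by move/eqP: fr0; rewrite oppr_eq0 => /eqP.
exists (- r); split=> //; first by rewrite ltrNl (lt_trans _ br) // ltrN2.
rewrite leNgt; apply/negP => dgr.
have [e e0 he] := derive1_gt0_sign (@dg (- r)) dgr gr0.
pose u := Order.min b (- r + e / 2).
have ub : u <= b by rewrite ge_min lexx.
have ru : - r < u by rewrite lt_min; apply/andP; split; [rewrite ltrNl | ]; lra.
have ur : u <= - r + e / 2 by rewrite ge_min lexx orbT.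
have hu : `|u - - r| < e by rewrite ger0_norm ?subr_ge0 ?ltW //; lra.
have := (he u hu).1 ru; have := fpos (- u); rewrite /f opprK lerN2 ltrNl; lra.
Qed.

End DerivableSignChange.

(** * Green paths *)

Section GreenPath.
Variables (K : fieldType) (L : falgType K) (R : realType).
Variables (G : rmod L -> Prop) (th : R -> rmod L -> R).
Hypotheses (hG : torsion_class G) (hgp : green_path G th).
Implicit Types (Y N : rmod L) (r s t : R).

Let hadd t : Defs.additive (th t).
Proof. by case: hgp. Qed.

Let hder N x : derivable (fun u => th u N) x 1.
Proof. by case: hgp => _ hsmooth _ _ _; apply: (hsmooth N 0%N x). Qed.

Let hgreen s N : G N -> (0 < rdim N)%N -> inD G (th s) N ->
  0 < derive1 (fun u => th u N) s.
Proof. by case: hgp => _ _ hgr _ _; apply: hgr. Qed.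

(* [quots_gt0 t X] is membership of [X] in [P(th t)]; [quots_ge0 s U V] and
   [subs_le0 s U V] are the weak conditions on [U / V] that propagate to strict
   positivity at later, resp. negativity at earlier, times. *)
Definition quots_ge0 s Y (U V : 'M[K]_(rdim Y)) := forall W, rel_strict G U V W ->
  (W < U)%MS -> forall N, sq_iso U W N -> 0 <= th s N.

Definition subs_le0 s Y (U V : 'M[K]_(rdim Y)) := forall W, rel_strict G U V W ->
  (V < W)%MS -> forall N, sq_iso W V N -> th s N <= 0.

Definition quots_gt0 t Y (X : 'M[K]_(rdim Y)) := forall B, rel_strict G X 0 B ->
  (B < X)%MS -> forall N, sq_iso X B N -> 0 < th t N.

Lemma sq_iso_rdim_gt0 Y N (U V : 'M[K]_(rdim Y)) : sq_iso U V N -> (V < U)%MS -> (0 < rdim N)%N.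
Proof. by move=> hN /rank_ltmx; rewrite (sq_iso_rank hN); lia. Qed.

Lemma inD_rel_strict s Y N0 (U V : 'M[K]_(rdim Y)) :
  submod V -> sq_iso U V N0 -> th s N0 = 0 ->
  (forall W N, rel_strict G U V W -> (V < W)%MS -> (W < U)%MS -> sq_iso W V N ->
     th s N <= 0) ->
  inD G (th s) N0.
Proof.
move=> hV hN0 thN0 hneg; split=> // Wn N hWn hN.
have /sq_isoP [F hF] := hN0.
have hW := (rel_strict_lift G hF hV Wn).1 hWn.
have hWV : sq_iso (Wn *m F + V)%MS V N.
  exact (sq_iso_eqmx (eqmx_refl _) (lift0mx V F) (sq_iso_lift hF hN)).
have [_ hVW hWU _ _] := hW.
have [WV|nWV] := boolP (Wn *m F + V <= V)%MS; first by rewrite (additive_subquot0 (hadd s) hWV WV).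
have [UW|nUW] := boolP (U <= Wn *m F + V)%MS.
  have eW : (Wn *m F + V :=: U)%MS by apply/eqmxP; rewrite hWU UW.
  by rewrite (additive_sq_iso (hadd s) hV (sq_iso_eqmx eW (eqmx_refl V) hWV) hN0) thN0.
by apply: (hneg _ _ hW _ _ hWV); rewrite ltmxE ?hVW ?hWU.
Qed.

Lemma green_zero r Y N0 (U V : 'M[K]_(rdim Y)) :
  G N0 -> submod V -> sq_iso U V N0 -> (V < U)%MS ->
  th r N0 = 0 -> derive1 (fun u => th u N0) r <= 0 ->
  exists W N, [/\ rel_strict G U V W, (V < W)%MS, (W < U)%MS, sq_iso W V N & 0 < th r N].
Proof.
move=> GN0 hV hN0 VU thr dthr; apply: contrapT => noW.
suff /(hgreen GN0 (sq_iso_rdim_gt0 hN0 VU)) : inD G (th r) N0 by lra.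
apply: (inD_rel_strict hV hN0 thr) => W N hW VW WU hN.
by rewrite leNgt; apply/negP => thN; apply: noW; exists W, N.
Qed.

Lemma quots_ge0_gt0 s Y (U V : 'M[K]_(rdim Y)) :
  submod U -> submod V -> (V < U)%MS -> inG G U V -> quots_ge0 s U V ->
  forall t N, s < t -> sq_iso U V N -> 0 < th t N.
Proof.
have [n] := ubnP (\rank U - \rank V); elim: n => // n IH in U V *.
move=> ltn hU hV VU GUV hP t N st hN; have [N0 [GN0 hN0]] := GUV.
rewrite (additive_sq_iso (hadd t) hV hN hN0).
have hVU := ltmxW VU.
have ths : 0 <= th s N0 := hP V (rel_strict_bot hG GN0 hV hVU) VU N0 hN0.
have dths : th s N0 = 0 -> 0 < derive1 (fun u => th u N0) s.
  move=> ths0; apply: hgreen GN0 (sq_iso_rdim_gt0 hN0 VU) _.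
  apply: (inD_rel_strict hV hN0 ths0) => W N' hW VW WU hN'.
  have [hWm _ hWU _ _] := hW.
  have [N'' hN''] := exists_subquot hU hWm hWU.
  have := hP W hW WU N'' hN''.
  by have := additive_subquot (hadd s) hV hWm (ltmxW VW) hWU hN0 hN' hN''; lra.
rewrite ltNge; apply/negP => tht.
have [r [sr thr dthr]] := zero_derive1_le0_after (@hder N0) st ths dths tht.
have [W [N' [hW VW WU hN' thN']]] := green_zero GN0 hV hN0 VU thr dthr.
have [hWm hVW hWU GWV _] := hW.
have [N'' hN''] := exists_subquot hU hWm hWU.
have := additive_subquot (hadd r) hV hWm hVW hWU hN0 hN' hN''.
suff : 0 < th r N'' by lra.
apply: (IH U W _ hU hWm WU _ _ r N'' sr hN'').
- by rewrite ltnS in ltn; apply: leq_trans ltn; apply: ltn_sub2l (rank_ltmx VU) (rank_ltmx VW).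
- exact: (inG_quot hG hV hWm hVW hWU GUV).
- move=> W' hW' W'U N3 hN3; apply: (hP W' _ W'U N3 hN3).
  exact: (rel_strict_quot hG hV hW hW').
Qed.

Lemma subs_le0_lt0 s Y (U V : 'M[K]_(rdim Y)) :
  submod U -> submod V -> (V < U)%MS -> inG G U V -> subs_le0 s U V ->
  forall t N, t < s -> sq_iso U V N -> th t N < 0.
Proof.
have [n] := ubnP (\rank U - \rank V); elim: n => // n IH in U V *.
move=> ltn hU hV VU GUV hQ t N ts hN; have [N0 [GN0 hN0]] := GUV.
rewrite (additive_sq_iso (hadd t) hV hN hN0).
have ths : th s N0 <= 0 := hQ U (rel_strict_top hU (ltmxW VU) GUV) VU N0 hN0.
have dths : th s N0 = 0 -> 0 < derive1 (fun u => th u N0) s.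
  move=> ths0; apply: hgreen GN0 (sq_iso_rdim_gt0 hN0 VU) _.
  by apply: (inD_rel_strict hV hN0 ths0) => W N' hW VW _; apply: hQ.
rewrite ltNge; apply/negP => tht.
have [r [rs thr dthr]] := zero_derive1_le0_before (@hder N0) ts ths dths tht.
have [W [N' [hW VW WU hN' thN']]] := green_zero GN0 hV hN0 VU thr dthr.
have [hWm hVW hWU GWV _] := hW.
suff : th r N' < 0 by lra.
apply: (IH W V _ hWm hV VW GWV _ r N' rs hN').
  by rewrite ltnS in ltn; apply: leq_trans ltn; apply: ltn_sub2r (rank_ltmx VU) (rank_ltmx WU).
move=> W' hW' VW' N3 hN3; apply: (hQ W' _ VW' N3 hN3).
exact: (rel_strict_trans hW hW').
Qed.

Lemma inW_quots_gt0 s t N : inW G (th s) N -> s < t -> quots_gt0 t (1%:M : 'M[K]_(rdim N)).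
Proof.
case=> GN [thN0 hD] st B hB B1 N2 hN2; have [hBm _ _ _ _] := hB.
have G10 : inG G (1%:M : 'M[K]_(rdim N)) 0 by exists N; split; last exact: sq_iso_id.
apply: (quots_ge0_gt0 (submod1 N) hBm B1 _ _ st hN2).
  exact: (inG_quot hG (submod0 N) hBm (sub0mx _ _) (submx1 _) G10).
move=> W hW W1 N3 hN3; have hW0 := rel_strict_quot hG (submod0 N) hB hW.
have [hWm _ _ _ _] := hW0.
have [N4 hN4] := exists_subquot hWm (submod0 N) (sub0mx _ _).
have := hD W N4 ((strict_subE G W).2 hW0) hN4.
have := additive_subquot (hadd s) (submod0 N) hWm (sub0mx _ _) (submx1 _) (sq_iso_id N) hN4 hN3.
by rewrite thN0; lra.
Qed.

Lemma subquot_quots_gt0 t Y Nk (X A C : 'M[K]_(rdim Y)) :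
  submod A -> sq_iso X A Nk -> quots_gt0 t (1%:M : 'M[K]_(rdim Nk)) ->
  rel_strict G X A C -> (C < X)%MS -> forall N, sq_iso X C N -> 0 < th t N.
Proof.
move=> hA /sq_isoP [F hF] hP hC CX N hN; have [hCm hAC hCX _ _] := hC.
have [Cn _ eC] := lift_onto hF hA hCm hAC hCX.
apply: (hP Cn).
- apply/strict_subE/(rel_strict_lift G hF hA).
  exact: rel_strict_eqmx (eqmx_sym eC) hC.
- move: CX; rewrite !ltmxE submx1 hCX /=; apply: contra => C1.
  by rewrite -(lift1mx hF.1) -eC addsmxS ?submxMr.
- by apply: (sq_iso_unlift hF hA); apply: sq_iso_eqmx (eqmx_sym (lift1mx hF.1)) (eqmx_sym eC) hN.
Qed.

Lemma quots_gt0_ext s t Y Nk (X A : 'M[K]_(rdim Y)) :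
  submod X -> submod A -> inG G A 0 -> sq_iso X A Nk -> inW G (th s) Nk -> s < t ->
  quots_gt0 t A -> quots_gt0 t X.
Proof.
move=> hX hA GA hNk hWk st hPA B hB BX N hN; have [hBm _ hBX _ _] := hB.
have hAX := sq_iso_sub hNk; have hAB := submod_adds hA hBm.
have hABX : (A + B <= X)%MS by rewrite addsmx_sub hAX.
have [N1 hN1] := exists_subquot hAB hBm (addsmxSr A B).
have [N2 hN2] := exists_subquot hX hAB hABX.
rewrite (additive_subquot (hadd t) hBm hAB (addsmxSr _ _) hABX hN hN1 hN2).
(* [X / B] is an extension of [X / (A + B)], a strict quotient of [X / A], by
   [(A + B) / B], which is isomorphic to the strict quotient [A / (A :&: B)] of [A]. *)
have p1 : th t N1 = 0 /\ (A <= B)%MS \/ 0 < th t N1.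
  have [N3 hN3] := exists_subquot hA (submod_cap hA hBm) (capmxSl A B).
  rewrite (additive_sq_iso (hadd t) hBm hN1 (sq_iso_adds hN3)).
  have [AB|nAB] := boolP (A <= B)%MS; [left | right].
    by split=> //; apply: (additive_subquot0 (hadd t) hN3); rewrite sub_capmx submx_refl.
  apply: (hPA _ (rel_strict_cap hB hA hAX GA) _ N3 hN3).
  by rewrite ltmxE capmxSl sub_capmx submx_refl.
have p2 : th t N2 = 0 /\ (X <= A + B)%MS \/ 0 < th t N2.
  have [XAB|nXAB] := boolP (X <= A + B)%MS; [left | right].
    by split=> //; apply: (additive_subquot0 (hadd t) hN2).
  apply: (subquot_quots_gt0 hA hNk (inW_quots_gt0 hWk st) (rel_strict_adds hG hB hA hAX GA) _ hN2).
  by rewrite ltmxE hABX.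
case: p1 p2 => [[-> AB]|?] [[-> XAB]|?]; try lra.
move: BX; rewrite ltmxE hBX (submx_trans XAB) //.
by rewrite addsmx_sub AB submx_refl.
Qed.

Lemma quots_gt0_eqmx t Y (X X' : 'M[K]_(rdim Y)) :
  (X :=: X')%MS -> quots_gt0 t X -> quots_gt0 t X'.
Proof.
move=> eX hP B hB BX N hN; apply: (hP B (rel_strict_eqmxl (eqmx_sym eX) hB)).
  by move: BX; rewrite !ltmxE !eX.
exact (sq_iso_eqmx (eqmx_sym eX) (eqmx_refl B) hN).
Qed.

Lemma inPE t N : inP G (th t) N <-> G N /\ quots_gt0 t (1%:M : 'M[K]_(rdim N)).
Proof.
split=> -[GN hP]; split=> //.
  move=> B hB; rewrite ltmxE submx1 => /negP nB N' hN.
  exact: (hP B N' ((strict_subE G B).2 hB) nB hN).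
move=> B N' hB nB hN; apply: (hP B ((strict_subE G B).1 hB) _ N' hN).
by rewrite ltmxE submx1; apply/negP.
Qed.

Lemma inW_le0_before s t N : inW G (th s) N -> t <= s -> th t N <= 0.
Proof.
move=> hW; rewrite le_eqVlt => /predU1P [-> | ts]; first by case: hW => _ [-> _].
have [N0|Npos] := posnP (rdim N); first by rewrite additive_dim0.
have [GN [_ hD]] := hW.
apply/ltW/(subs_le0_lt0 (submod1 N) (submod0 N) _ _ _ ts (sq_iso_id N)).
- by rewrite ltmxE sub0mx submx0 -mxrank_eq0 mxrank1 -lt0n Npos.
- by exists N; split; last exact: sq_iso_id.
- move=> W hW' _ N' hN'; exact: hD W N' ((strict_subE G W).2 hW') hN'.
Qed.

End GreenPath.

Lemma le_first_decreasing (R : realDomainType) (t : nat -> R) m :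
  (forall k, (0 < k < m)%N -> t k.+1 < t k) -> forall k, (0 < k <= m)%N -> t k <= t 1%N.
Proof.
move=> hdec; elim=> [|[|k] IH] // hk.
have hk1 : (0 < k.+1 <= m)%N by lia.
have hk2 : (0 < k.+1 < m)%N by lia.
exact: le_trans (ltW (hdec _ hk2)) (IH hk1).
Qed.

Section StrictChain.
Variables (K : fieldType) (L : falgType K) (R : realType).
Variables (G : rmod L -> Prop) (theta : R -> rmod L -> R) (t0 : R).
Variables (M : rmod L) (m : nat) (Ms : nat -> 'M[K]_(rdim M)) (t : nat -> R).
Hypotheses (hG : torsion_class G) (hgp : green_path G theta) (GM : G M).
Hypotheses (e0 : (Ms 0%N :=: (1%:M : 'M[K]_(rdim M)))%MS) (em : (Ms m :=: (0 : 'M[K]_(rdim M)))%MS).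
Hypotheses (hstr : forall k, (k <= m)%N -> strict_sub G (Ms k))
  (hlt : forall k, (0 < k <= m)%N -> (Ms k < Ms k.-1)%MS)
  (hfac : forall k, (0 < k <= m)%N ->
     exists N, sq_iso (Ms k.-1) (Ms k) N /\ inW G (theta (t k)) N).

Lemma chain_length_gt0 : (0 < rdim M)%N -> (0 < m)%N.
Proof.
move=> Mpos; have rkm : \rank (Ms m) = 0%N by rewrite em mxrank0.
by rewrite lt0n; apply/eqP => m0; move: rkm; rewrite m0 e0 mxrank1; lia.
Qed.

Lemma inP_first_lt : (0 < rdim M)%N -> inP G (theta t0) M -> t 1%N < t0.
Proof.
move=> /chain_length_gt0 m_gt0 /inPE [_ hP]; rewrite ltNge; apply/negP => t01.
have h1 : (0 < 1 <= m)%N by [].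
have [N1 [hN1 hW1]] := hfac h1.
have := inW_le0_before hgp hW1 t01.
suff : 0 < theta t0 N1 by lra.
apply: (hP (Ms 1%N) ((strict_subE G _).1 (hstr m_gt0))).
  by move: (hlt h1); rewrite !ltmxE !e0.
exact (sq_iso_eqmx e0 (eqmx_refl _) hN1).
Qed.

Lemma inP_of_lt : (forall k, (0 < k <= m)%N -> t k < t0) -> inP G (theta t0) M.
Proof.
move=> htk; apply/inPE; split=> //; apply: (quots_gt0_eqmx e0).
suff /(_ m (leqnn m)) : forall j, (j <= m)%N -> quots_gt0 G theta t0 (Ms (m - j)%N).
  by rewrite subnn.
elim=> [|j IH] hj.
  by rewrite subn0 => B _; rewrite ltmxE !em sub0mx andbF.
have hk : (0 < m - j <= m)%N by lia.
have [Nk [hNk hWk]] := hfac hk.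
have [[hA GA] _] := hstr (leq_subr j m).
have [[hX _] _] := @hstr (m - j).-1 (leq_trans (leq_pred _) (leq_subr j m)).
rewrite subnS; apply: (quots_gt0_ext hG hgp hX hA GA hNk hWk (htk _ hk)).
exact: IH (ltnW hj).
Qed.

End StrictChain.

Theorem mainTheorem20 (K : fieldType) (L : falgType K) (R : realType)
  (G : rmod L -> Prop) (theta : R -> rmod L -> R) (t0 : R)
  (M : rmod L) (m : nat) (Ms : nat -> 'M[K]_(rdim M)) (t : nat -> R) :
  torsion_class G ->
  green_path G theta ->
  G M -> (0 < rdim M)%N ->
  (Ms 0%N == (1%:M : 'M[K]_(rdim M)))%MS -> (Ms m == (0 : 'M[K]_(rdim M)))%MS ->
  (forall k, (k <= m)%N -> strict_sub G (Ms k)) ->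
  (forall k, (0 < k <= m)%N -> (Ms k < Ms k.-1)%MS) ->
  (forall k, (0 < k <= m)%N ->
     exists N, sq_iso (Ms k.-1) (Ms k) N /\ inW G (theta (t k)) N) ->
  (forall k, (0 < k < m)%N -> t k.+1 < t k) ->
  (inP G (theta t0) M <-> (forall k, (0 < k <= m)%N -> t k < t0)) /\
  (inP G (theta t0) M <-> t 1%N < t0).
Proof.
move=> hG hgp GM Mpos /eqmxP e0 /eqmxP em hstr hlt hfac hdec.
have tk_le_t1 := le_first_decreasing hdec.
have P_t1 := inP_first_lt (t0 := t0) hgp e0 em hstr hlt hfac Mpos.
have tk_P := inP_of_lt (t0 := t0) hG hgp GM e0 em hstr hfac.
split; split=> [hP|ht].
- by move=> k hk; apply: le_lt_trans (tk_le_t1 k hk) (P_t1 hP).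
- exact: tk_P.
- exact: P_t1.
- by apply: tk_P => k hk; apply: le_lt_trans (tk_le_t1 k hk) ht.
Qed.
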